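(* Let $M=(m_{ij})_{1\le i,j\le 4}$ be an invertible real $4\times 4$ matrix and let $\phi$ be the associated partial map $\mathbb{R}^3\to\mathbb{R}^3$, $$\phi(\lambda_1,\lambda_2,\lambda_3)=\left(\frac{w_1}{w_4},\frac{w_2}{w_4},\frac{w_3}{w_4}\right),\qquad w=M(\lambda_1,\lambda_2,\lambda_3,1)^{T},$$ defined wherever $w_4\neq 0$. Assume: (1) $\phi$ is defined at the origin and $\phi(0)=0$; (2) $\phi$ preserves each of the three coordinate axes, i.e. for each $k\in\{1,2,3\}$, every point of the $k$-th coordinate axis at which $\phi$ is defined is mapped into the $k$-th coordinate axis; (3) $\phi$ is defined on the whole closed half-space $\{(x,y,z)\in\mathbb{R}^3: z\ge 0\}$, i.e. $(M(x,y,z,1)^T)_4\neq 0$ whenever $z\ge 0$; (4) the differential of $\phi$ at the origin is the identity: $d\phi[0;v]=v$ for all $v\in\mathbb{R}^3$. Then there exist $\lambda\in\mathbb{R}\setminus\{0\}$ and $c\ge 0$ such that $$M=\lambda\begin{pmatrix}1&0&0&0\\0&1&0&0\\0&0&1&0\\0&0&c&1\end{pmatrix},$$ so that $\phi(x,y,z)=\left(\frac{x}{cz+1},\frac{y}{cz+1},\frac{z}{cz+1}\right)$.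
   Context: Points of $\mathbb{R}^3$ are written $(x,y,z)$; the $z$-axis is interpreted as the direction in which the subject is looking. Any invertible $4\times4$ matrix induces a projective transformation of $P_3(\mathbb{R})$, and $M$ and $\lambda M$ ($\lambda\ne0$) induce the same transformation; $\phi$ above is its expression in the affine chart where the fourth homogeneous coordinate equals $1$. *)

From HB Require Import structures.
From mathcomp Require Import all_boot all_order all_algebra.
From mathcomp Require Import all_classical all_reals all_analysis.
Set Implicit Arguments. Unset Strict Implicit. Unset Printing Implicit Defensive.
Import Order.TTheory GRing.Theory Num.Theory.
Import numFieldNormedType.Exports.
Local Open Scope ring_scope.

Section Proj.
Variable R : realType.

(* homogeneous coordinates (x1,x2,x3,1)^T of a point x of R^3 *)
Definition hom (x : 'rV[R]_3) : 'cV[R]_4 :=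
  \col_(i < 4) (if unlift ord_max i is Some j then x 0 j else 1).

Definition wvec (M : 'M[R]_4) (x : 'rV[R]_3) : 'cV[R]_4 := M *m hom x.

Definition w4 (M : 'M[R]_4) (x : 'rV[R]_3) : R := wvec M x ord_max 0.

Definition phi_defined (M : 'M[R]_4) (x : 'rV[R]_3) : Prop := w4 M x != 0.

(* phi(x) = (w1/w4, w2/w4, w3/w4); outside its domain the value is junk
   (MathComp's x/0 = 0) and is never used by the hypotheses except through
   the differential at 0, which only depends on a neighbourhood of 0
   where phi is defined. *)
Definition phi (M : 'M[R]_4) (x : 'rV[R]_3) : 'rV[R]_3 :=
  \row_(j < 3) (wvec M x (lift ord_max j) 0 / w4 M x).

Definition on_axis (k : 'I_3) (x : 'rV[R]_3) : Prop :=
  forall j : 'I_3, j != k -> x 0 j = 0.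

Definition zidx : 'I_3 := @Ordinal 3 2 erefl.

(* the matrix [[1,0,0,0],[0,1,0,0],[0,0,1,0],[0,0,c,1]] *)
Definition Mc (c : R) : 'M[R]_4 :=
  \matrix_(i < 4, j < 4)
    (if i == j then 1
     else if (val i == 3%N) && (val j == 2%N) then c else 0).

End Proj.

From HB Require Import structures.
From mathcomp Require Import all_boot all_order all_algebra.
From mathcomp Require Import all_classical all_reals all_analysis.
Set Implicit Arguments.
Unset Strict Implicit.
Unset Printing Implicit Defensive.
Import Order.TTheory GRing.Theory Num.Theory.
Import numFieldNormedType.Exports.
Local Open Scope classical_set_scope.
Local Open Scope ring_scope.

(* Write L j for the homogeneous index of the affine coordinate
   j, so that w_i(x) = sum_j M_(i, L j) x_j + M_(i,4), and let d := M_(4,4).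
   Each hypothesis pins down one block of M:
   - phi(0) = 0 with d <> 0 kills the translation column M_(L j, 4);
   - axis preservation, tested at a point t e_k of the k-th axis where phi
     is defined, kills the off-diagonal entries M_(L j, L k);
   - phi then maps the k-th axis to itself by h e_k |-> h g(h) e_k with
     g(h) = M_(Lk,Lk) / (M_(4,Lk) h + d), so its derivative along e_k is
     g(0) e_k (lemma derive_along_line); dphi[0] = id forces M_(Lk,Lk) = d;
   - w_4(x) = sum_k M_(4,Lk) x_k + d must not vanish on {z >= 0}: this kills
     M_(4,Lx), M_(4,Ly) and forces M_(4,Lz) / d >= 0.
   Reading off the entries then gives M = d *: Mc (M_(4,Lz) / d). *)

(* If f maps the line through v into the line through w by
   f(h v) = (h g(h)) w with g continuous at 0, then the derivative of f at 0
   along v is g(0) w: the difference quotient is exactly g(h) w. *)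
Lemma derive_along_line {R : realType} {V W : normedModType R}
    {f : V -> W} {v : V} {w : W} {g : R -> R} :
  (forall h : R, f (h *: v) = (h * g h) *: w) -> {for 0, continuous g} ->
  derivable f 0 v -> 'D_v f 0 = g 0 *: w.
Proof.
move=> fline gcont fder.
have f0 : f 0 = 0 by rewrite -(scale0r v) fline mul0r scale0r.
have quotient_eq : {near 0^', (fun h : R => h^-1 *: ((f \o shift 0) (h *: v) - f 0))
                              =1 (fun h => g h *: w)}.
  near=> h; have h0 : h != 0 by near: h; exact: nbhs_dnbhs_neq.
  by rewrite /= addr0 f0 subr0 fline scalerA mulKf.
have quotient_cvg : (fun h : R => h^-1 *: ((f \o shift 0) (h *: v) - f 0))
                       @ 0^' --> 'D_v f 0 by exact: fder.
have to_derive := cvg_trans (near_eq_cvg quotient_eq) quotient_cvg.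
have to_value : (fun h : R => g h *: w) @ 0^' --> g 0 *: w.
  by apply: cvgZ; [exact: cvg_within_filter | exact: cvg_cst].
exact: (cvg_unique _ (to_derive (dnbhs_filter _)) to_value).
Unshelve. all: by end_near. Qed.

Section Projective.
Context {R : realType}.
Implicit Types (M : 'M[R]_4) (x : 'rV[R]_3) (c : R).

Local Notation L := (@lift 4 ord_max).

Lemma wvecE M x i :
  wvec M x i 0 = \sum_(j < 3) M i (L j) * x 0 j + M i ord_max.
Proof.
rewrite /wvec mxE big_ord_recr /= /hom mxE unlift_none mulr1; congr (_ + _).
apply: eq_bigr => j _; rewrite mxE.
have -> : widen_ord (leqnSn 3) j = L j by apply/val_inj; rewrite /= /bump leqNgt ltn_ord.
by rewrite liftK.
Qed.

Lemma phiE M x (j : 'I_3) : phi M x 0 j = wvec M x (L j) 0 / w4 M x.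
Proof. by rewrite mxE. Qed.

Lemma wvec0 M i : wvec M 0 i 0 = M i ord_max.
Proof. by rewrite wvecE big1 ?add0r // => j _; rewrite mxE mulr0. Qed.

Lemma wvec_axis M k t i :
  wvec M (t *: delta_mx 0 k) i 0 = M i (L k) * t + M i ord_max.
Proof.
rewrite wvecE (bigD1 k) //= big1 ?addr0; first by rewrite !mxE !eqxx mulr1.
by move=> j /negPf jk; rewrite !mxE jk andbF !mulr0.
Qed.

Lemma affine_nonroot (a d : R) : d != 0 -> exists2 t : R, t != 0 & a * t + d != 0.
Proof.
move=> d0; have [->|a0] := eqVneq a 0.
  by exists 1; rewrite ?oner_eq0 // mul0r add0r.
exists (d / a); first by rewrite mulf_neq0 ?invr_eq0.
by rewrite mulrC divfK // -mulr2n mulrn_eq0.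
Qed.

Lemma val_L (i : 'I_3) : val (L i) = val i.
Proof. exact: lift_max. Qed.

Lemma Mc_affine c (i j : 'I_3) : Mc c (L i) (L j) = (i == j)%:R.
Proof.
rewrite mxE (inj_eq (@lift_inj _ ord_max)).
by case: eqVneq => _ //; rewrite val_L (ltn_eqF (ltn_ord i)).
Qed.

Lemma Mc_col c (i : 'I_3) : Mc c (L i) ord_max = 0.
Proof. by rewrite mxE eq_sym (negPf (neq_lift _ _)) val_L (ltn_eqF (ltn_ord i)). Qed.

Lemma Mc_row c (j : 'I_3) : Mc c ord_max (L j) = if j == zidx then c else 0.
Proof. by rewrite mxE (negPf (neq_lift _ _)) val_L. Qed.

Lemma Mc_corner c : Mc c ord_max ord_max = 1.
Proof. by rewrite mxE eqxx. Qed.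

Lemma translation_col_zero M :
  phi_defined M 0 -> phi M 0 = 0 -> forall j : 'I_3, M (L j) ord_max = 0.
Proof.
rewrite /phi_defined /w4 wvec0 => d0 phi0 j.
have /eqP := congr1 (fun y : 'rV[R]_3 => y 0 j) phi0.
by rewrite phiE /w4 !wvec0 mxE mulf_eq0 invr_eq0 (negPf d0) orbF => /eqP.
Qed.

Lemma axis_offdiag_zero M (k : 'I_3) :
  M ord_max ord_max != 0 -> (forall j : 'I_3, M (L j) ord_max = 0) ->
  (forall x, on_axis k x -> phi_defined M x -> on_axis k (phi M x)) ->
  forall j : 'I_3, j != k -> M (L j) (L k) = 0.
Proof.
move=> d0 col axis j jk.
have [t t0 wt] := affine_nonroot (M ord_max (L k)) d0.
have on_k : on_axis k (t *: delta_mx 0 k).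
  by move=> j' j'k; rewrite !mxE (negPf j'k) andbF mulr0.
have defined : phi_defined M (t *: delta_mx 0 k) by rewrite /phi_defined /w4 wvec_axis.
have /eqP := axis _ on_k defined j jk.
rewrite phiE /w4 !wvec_axis col addr0 mulf_eq0 invr_eq0 (negPf wt) orbF.
by rewrite mulf_eq0 (negPf t0) orbF => /eqP.
Qed.

Lemma phi_axis M (i : 'I_3) (h : R) :
  (forall j : 'I_3, j != i -> M (L j) (L i) = 0) ->
  (forall j : 'I_3, M (L j) ord_max = 0) ->
  phi M (h *: delta_mx 0 i) =
  (h * (M (L i) (L i) / (M ord_max (L i) * h + M ord_max ord_max))) *: delta_mx 0 i.
Proof.
move=> offdiag col; apply/rowP => j; rewrite phiE /w4 !wvec_axis col addr0 !mxE.
have [->|ji] := eqVneq j i; first by rewrite eqxx mulr1 mulrA [h * _]mulrC.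
by rewrite offdiag // mul0r mul0r andbF mulr0.
Qed.

Lemma axis_diag M (i : 'I_3) :
  M ord_max ord_max != 0 ->
  (forall j : 'I_3, j != i -> M (L j) (L i) = 0) ->
  (forall j : 'I_3, M (L j) ord_max = 0) ->
  differentiable (phi M) 0 -> (forall v, 'd (phi M) 0 v = v) ->
  M (L i) (L i) = M ord_max ord_max.
Proof.
move=> d0 offdiag col dif dv.
set g := fun h : R => M (L i) (L i) / (M ord_max (L i) * h + M ord_max ord_max).
have g_cont : {for 0, continuous g}.
  apply: cvgM; first exact: cvg_cst.
  apply: cvgV; first by rewrite mulr0 add0r.
  by apply: cvgD; [apply: cvgMl_tmp; exact: cvg_id | exact: cvg_cst].
have := derive_along_line (fun h => @phi_axis M i h offdiag col) g_cont (diff_derivable dif).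
rewrite deriveE // dv => /rowP /(_ i).
rewrite !mxE !eqxx /= mulr1 /g mulr0 add0r => /esym /(congr1 (fun t => t * M ord_max ord_max)).
by rewrite divfK // mul1r.
Qed.

(* w_4 vanishes somewhere on a horizontal axis unless its coefficient is 0. *)
Lemma halfspace_row_zero M :
  (forall x, 0 <= x 0 zidx -> phi_defined M x) ->
  forall k : 'I_3, k != zidx -> M ord_max (L k) = 0.
Proof.
move=> half k kz; apply/eqP; apply: contraT => a0.
have := half ((- M ord_max ord_max / M ord_max (L k)) *: delta_mx 0 k).
rewrite !mxE eq_sym (negPf kz) andbF mulr0 lexx /phi_defined /w4 wvec_axis.
by rewrite mulrC divfK // addNr eqxx => /(_ isT).
Qed.

(* w_4 vanishes somewhere on the positive z-axis unless M_(4,Lz) / d >= 0. *)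
Lemma halfspace_sign M :
  (forall x, 0 <= x 0 zidx -> phi_defined M x) -> M ord_max ord_max != 0 ->
  0 <= M ord_max (L zidx) / M ord_max ord_max.
Proof.
move=> half d0; rewrite leNgt; apply/negP => cd.
have c0 : M ord_max (L zidx) != 0 by apply: contraTneq cd => ->; rewrite mul0r ltxx.
have := half ((- (M ord_max (L zidx) / M ord_max ord_max)^-1) *: delta_mx 0 zidx).
rewrite !mxE !eqxx mulr1 oppr_ge0 invr_le0 (ltW cd) /phi_defined /w4 wvec_axis.
by rewrite invf_div mulrN mulrCA mulfV // mulr1 addNr eqxx => /(_ isT).
Qed.

Lemma eq_scaled_Mc M :
  M ord_max ord_max != 0 ->
  (forall j : 'I_3, M (L j) ord_max = 0) ->
  (forall i j : 'I_3, j != i -> M (L j) (L i) = 0) ->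
  (forall i : 'I_3, M (L i) (L i) = M ord_max ord_max) ->
  (forall k : 'I_3, k != zidx -> M ord_max (L k) = 0) ->
  M = M ord_max ord_max *: Mc (M ord_max (L zidx) / M ord_max ord_max).
Proof.
move=> d0 col offdiag diag row; apply/matrixP => i j; rewrite mxE.
case: (unliftP ord_max i) => [i'|] ->; case: (unliftP ord_max j) => [j'|] ->.
- rewrite Mc_affine; have [->|ij] := eqVneq i' j'; first by rewrite diag mulr1.
  by rewrite offdiag // mulr0n mulr0.
- by rewrite Mc_col col mulr0.
- rewrite Mc_row; have [->|jz] := eqVneq j' zidx; first by rewrite mulrC divfK.
  by rewrite row // mulr0.
- by rewrite Mc_corner mulr1.
Qed.

End Projective.

Theorem mainTheorem1 (R : realType) (M : 'M[R]_4) :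
  M \in unitmx ->
  (* (1) *)
  phi_defined M 0 -> phi M 0 = 0 ->
  (* (2) *)
  (forall (k : 'I_3) (x : 'rV[R]_3),
      on_axis k x -> phi_defined M x -> on_axis k (phi M x)) ->
  (* (3) *)
  (forall x : 'rV[R]_3, 0 <= x 0 zidx -> phi_defined M x) ->
  (* (4) *)
  differentiable (phi M) 0 -> (forall v : 'rV[R]_3, 'd (phi M) 0 v = v) ->
  exists (lam c : R), lam != 0 /\ 0 <= c /\ M = lam *: Mc c.
Proof.
move=> _ def0 phi0 axis half dif dv.
have d0 : M ord_max ord_max != 0 by move: def0; rewrite /phi_defined /w4 wvec0.
have col := translation_col_zero def0 phi0.
have offdiag k := axis_offdiag_zero d0 col (axis k).
have diag i := axis_diag d0 (offdiag i) col dif dv.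
exists (M ord_max ord_max), (M ord_max (lift ord_max zidx) / M ord_max ord_max).
split=> //; split; first exact: halfspace_sign.
exact: eq_scaled_Mc d0 col offdiag diag (halfspace_row_zero half).
Qed.
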